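(* Let $Q$ be a quiver without oriented cycles and $\mathbf{1}$ the dimension vector with $\mathbf{1}(x)=1$ for all $x\in Q_0$. For every $W\in\operatorname{Rep}(Q,\mathbf{1})$, the orbit semigroup $S(W)$ is saturated.
   Context: Work over an algebraically closed field $k$ of characteristic zero. $\operatorname{Rep}(Q,\mathbf{1})=k^{Q_1}$ with the torus $\operatorname{GL}(\mathbf{1})=(k^* )^{Q_0}$ acting by $(g\cdot W)(a)=g(ha)W(a)g(ta)^{-1}$. For $\sigma\in\mathbb{Z}^{Q_0}$, $\operatorname{SI}(Q,\mathbf{1})_\sigma$ is the space of polynomial functions $f$ with $g\cdot f=\sigma(g)f$, $\sigma(g)=\prod_xg(x)^{\sigma(x)}$, and $S(W)=\{\sigma\in\mathbb{Z}^{Q_0}\mid\exists f\in\operatorname{SI}(Q,\mathbf{1})_\sigma,\ f(W)\ne0\}$. Saturated means $n\sigma\in S(W)$ for some integer $n\ge1$ implies $\sigma\in S(W)$. *)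

From HB Require Import structures.
From mathcomp Require Import all_boot all_order all_algebra.
Set Implicit Arguments. Unset Strict Implicit. Unset Printing Implicit Defensive.
Import Order.TTheory GRing.Theory Num.Theory.
Local Open Scope ring_scope.

(* A finite quiver: vertices Q0, arrows Q1, head map hd and tail map tl
   (arrow a goes from tl a to hd a). *)

Definition arrow_next (Q0 Q1 : finType) (hd tl : Q1 -> Q0) : rel Q1 :=
  fun a b => hd a == tl b.

Definition oriented_cycle (Q0 Q1 : finType) (hd tl : Q1 -> Q0)
    (a : Q1) (p : seq Q1) : bool :=
  path (arrow_next hd tl) a p && (hd (last a p) == tl a).

Definition no_oriented_cycles (Q0 Q1 : finType) (hd tl : Q1 -> Q0) : Prop :=
  forall (a : Q1) (p : seq Q1), ~~ oriented_cycle hd tl a p.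

(* Rep(Q,1) = k^{Q1}; torus GL(1) = product of copies of k^* indexed by Q0, an element given by g : Q0 -> k
   with all g x nonzero. *)
Definition torus_elt (k : fieldType) (Q0 : finType) (g : Q0 -> k) : Prop :=
  forall x, g x != 0.

Definition rep_act (k : fieldType) (Q0 Q1 : finType) (hd tl : Q1 -> Q0)
    (g : Q0 -> k) (W : Q1 -> k) : Q1 -> k :=
  fun a => g (hd a) * W a * (g (tl a))^-1.

Definition torus_inv (k : fieldType) (Q0 : finType) (g : Q0 -> k) : Q0 -> k :=
  fun x => (g x)^-1.

Definition char_eval (k : fieldType) (Q0 : finType) (sigma : Q0 -> int)
    (g : Q0 -> k) : k :=
  \prod_(x : Q0) (g x) ^ (sigma x).

Definition is_polyfun (k : fieldType) (Q1 : finType) (f : (Q1 -> k) -> k) : Prop :=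
  exists s : seq (k * {ffun Q1 -> nat}),
    forall W : Q1 -> k, f W = \sum_(m <- s) m.1 * \prod_(a : Q1) (W a) ^+ (m.2 a).

(* f in SI(Q,1)_sigma : polynomial with g.f = sigma(g) f,
   where (g.f)(W) = f(g^-1 . W). *)
Definition semi_inv (k : fieldType) (Q0 Q1 : finType) (hd tl : Q1 -> Q0)
    (sigma : Q0 -> int) (f : (Q1 -> k) -> k) : Prop :=
  is_polyfun f /\
  forall g : Q0 -> k, torus_elt g ->
    forall W : Q1 -> k, f (rep_act hd tl (torus_inv g) W) = char_eval sigma g * f W.

Definition orbit_semigroup (k : fieldType) (Q0 Q1 : finType) (hd tl : Q1 -> Q0)
    (W : Q1 -> k) (sigma : Q0 -> int) : Prop :=
  exists f : (Q1 -> k) -> k, semi_inv hd tl sigma f /\ f W != 0.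

Definition saturated (Q0 : finType) (S : (Q0 -> int) -> Prop) : Prop :=
  forall (sigma : Q0 -> int) (n : nat), (1 <= n)%N ->
    S (fun x => n%:Z * sigma x) -> S sigma.

From HB Require Import structures.
From mathcomp Require Import all_boot all_order all_algebra ring.
Import Order.TTheory GRing.Theory Num.Theory.
Local Open Scope ring_scope.
Set Implicit Arguments. Unset Strict Implicit.

(* For dimension vector 1 the torus acts on the monomial with exponent
   vector m : Q1 -> nat through the character whose value at x is the number
   of arcs of m leaving x minus the number entering x; we call this the
   weight of m.  Since distinct torus characters are linearly independent in
   characteristic 0 (Artin's trick, using the element 2 of infinite order),
   sigma lies in S(W) exactly when sigma is the weight of some monomial not
   vanishing at W, i.e. of some m supported on the arcs where W is nonzero.

   If n * sigma is the weight of such an m, then m / n is a nonnegative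
   rational labelling of the same arcs with weight sigma.  It is rounded to a
   natural one: when some arc carries a non-integral value, the weights being
   integral, no vertex is an end of exactly one such arc, so these arcs
   support a nonzero rational circulation; moving along it until one more arc
   becomes integral keeps the labelling nonnegative and its weights, and does
   not enlarge its support. *)

Section Weights.
Variables (Q0 Q1 : finType) (hd tl : Q1 -> Q0).

Definition weight (R : pzRingType) (c : Q1 -> R) (x : Q0) : R :=
  \sum_a ((tl a == x)%:R - (hd a == x)%:R) * c a.

(* Every arc leaves one vertex and enters one vertex, so weights sum to 0. *)
Lemma weight_sum0 (R : pzRingType) (c : Q1 -> R) : \sum_x weight c x = 0.
Proof.
rewrite /weight exchange_big /= big1 // => a _.
have indicator_sum (z : Q0) : \sum_x ((z == x)%:R : R) = 1.
  by rewrite (bigD1 z) //= eqxx big1 ?addr0 // => x /negbTE; rewrite eq_sym => ->.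
by rewrite -mulr_suml sumrB !indicator_sum subrr mul0r.
Qed.

Lemma weight_shift (R : comPzRingType) (y c : Q1 -> R) (t : R) (x : Q0) :
  weight (fun a => y a + t * c a) x = weight y x + t * weight c x.
Proof.
by rewrite /weight mulr_sumr -big_split; apply: eq_bigr => a _; rewrite mulrDr mulrCA.
Qed.

Definition mweight (m : Q1 -> nat) : Q0 -> int := weight (fun a => (m a)%:R : int).

Lemma weight_divn (F : fieldType) (m : Q1 -> nat) (n : nat) (x : Q0) :
  weight (fun a => (m a)%:R / n%:R : F) x = (mweight m x)%:~R / n%:R.
Proof.
rewrite /mweight /weight rmorph_sum mulr_suml; apply: eq_bigr => a _.
by rewrite rmorphM rmorphB /= !rmorph_nat mulrA.
Qed.

End Weights.

Section Characters.
Variables (k : fieldType) (Q0 : finType).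

Lemma char_evalM (s : Q0 -> int) (h g : Q0 -> k) :
  char_eval s (fun x => h x * g x) = char_eval s h * char_eval s g.
Proof. by rewrite /char_eval -big_split; apply: eq_bigr => x _; rewrite expfzMl. Qed.

Lemma char_eval1 (s : Q0 -> int) : char_eval s (fun _ => 1 : k) = 1.
Proof. by rewrite /char_eval big1 // => x _; rewrite exp1rz. Qed.

Hypothesis char0 : [pchar k] =i pred0.

Lemma two_expz_eq1 (z : int) : (2 : k) ^ z = 1 -> z = 0.
Proof.
have two_expn_eq1 (n : nat) : (2 : k) ^+ n = 1 -> n = 0%N.
  move=> pow1; have : ((2 ^ n - 1)%N%:R : k) == 0.
    by rewrite natrB ?expn_gt0 // natrX pow1 subrr.
  rewrite ((pcharf0P _).1 char0) subn_eq0 => pow_le1.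
  by apply/eqP; rewrite -leqn0 -ltnS (leq_trans (ltn_expl n (isT : 1 < 2)%N)).
case: z => n; first by move/two_expn_eq1 ->.
rewrite NegzE -exprnN => /(congr1 GRing.inv); rewrite invrK invr1.
by move/two_expn_eq1.
Qed.

Lemma char_eval_separates (u w : {ffun Q0 -> int}) : u != w ->
  exists h : Q0 -> k, torus_elt h /\ char_eval u h != char_eval w h.
Proof.
move=> uw; have /forallPn[x uw_x] : ~~ [forall x, u x == w x].
  by apply: contra uw => /forallP uw_eq; apply/eqP/ffunP => x; apply/eqP/uw_eq.
have two_neq0 : (2 : k) != 0 by rewrite ((pcharf0P _).1 char0 2).
pose h y : k := if y == x then 2 else 1.
have char_h (s : Q0 -> int) : char_eval s h = 2 ^ s x.
  rewrite /char_eval (bigD1 x) //= /h eqxx big1 ?mulr1 // => y /negbTE ->.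
  by rewrite exp1rz.
exists h; split; first by move=> y; rewrite /h; case: ifP; rewrite ?oner_neq0.
rewrite !char_h; apply: contra uw_x => /eqP e; rewrite -subr_eq0.
by apply/eqP/two_expz_eq1; rewrite expfzDr // e -expfzDr // subrr.
Qed.

End Characters.

Section Independence.
Variables (k : fieldType) (Q0 : finType).
Hypothesis char0 : [pchar k] =i pred0.

Definition char_comb (l : seq (k * {ffun Q0 -> int})) (g : Q0 -> k) : k :=
  \sum_(e <- l) e.1 * char_eval e.2 g.

Definition vanishes_on_torus (l : seq (k * {ffun Q0 -> int})) : Prop :=
  forall g, torus_elt g -> char_comb l g = 0.

Definition coef_of (l : seq (k * {ffun Q0 -> int})) (w : {ffun Q0 -> int}) : k :=
  \sum_(e <- l | e.2 == w) e.1.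

(* Artin's trick: l(h g) - u(h) l(g) is a combination in which the
   character u no longer occurs. *)
Definition twist (h : Q0 -> k) (u : {ffun Q0 -> int})
    (l : seq (k * {ffun Q0 -> int})) : seq (k * {ffun Q0 -> int}) :=
  [seq ((e.1 * (char_eval e.2 h - char_eval u h), e.2) : k * {ffun Q0 -> int})
   | e : k * {ffun Q0 -> int} <- l & e.2 != u].

Lemma char_comb_twist h u l g :
  char_comb (twist h u l) g =
  char_comb l (fun x => h x * g x) - char_eval u h * char_comb l g.
Proof.
rewrite /char_comb /twist big_map big_filter mulr_sumr -sumrB big_mkcond /=.
apply: eq_bigr => e _; rewrite char_evalM.
case: (eqVneq e.2 u) => [->|_] /=; first by rewrite mulrCA subrr.
by ring.
Qed.

Lemma vanishes_twist h u l :
  torus_elt h -> vanishes_on_torus l -> vanishes_on_torus (twist h u l).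
Proof.
move=> Hh Hl g Hg; rewrite char_comb_twist !Hl ?mulr0 ?subr0 //.
by move=> x; rewrite mulf_neq0.
Qed.

Lemma coef_of_twist h u l w : u != w ->
  coef_of (twist h u l) w = coef_of l w * (char_eval w h - char_eval u h).
Proof.
move=> uw; rewrite /coef_of /twist big_map big_filter_cond mulr_suml /=.
apply: eq_big => [e|e /andP[_ /eqP ->] //].
by case: (eqVneq e.2 w) => [->|_]; rewrite ?andbF // andbT eq_sym.
Qed.

(* Induction on a list U containing the characters other than w occurring
   in l: each step eliminates one of them by a twist. *)
Lemma coef_of_vanishing_in w (U : seq {ffun Q0 -> int}) l :
  {in l, forall e, e.2 \in w :: U} -> vanishes_on_torus l -> coef_of l w = 0.
Proof.
elim: U l => [|u U IH] l Hl Hvan.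
  rewrite -(Hvan (fun _ => 1)) => [|_]; last exact: oner_neq0.
  rewrite /coef_of /char_comb big_seq_cond [RHS]big_seq_cond.
  apply: eq_big => [e|e /andP[_ /eqP ->]]; last by rewrite char_eval1 mulr1.
  by case el: (e \in l); rewrite //= -(mem_seq1 e.2 w) Hl.
have [uw_eq|uw] := eqVneq u w.
  by apply: IH => // e /Hl; rewrite uw_eq !inE orbA orbb.
have [h [Hh sep]] := char_eval_separates char0 uw.
have twist_in : {in twist h u l, forall e, e.2 \in w :: U}.
  move=> e' /mapP[e]; rewrite mem_filter => /andP[neu /Hl] ewU -> /=.
  by move: ewU; rewrite !inE (negbTE neu).
have /eqP := IH _ twist_in (vanishes_twist u Hh Hvan).
rewrite coef_of_twist // mulf_eq0 subr_eq0 [char_eval w h == _]eq_sym.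
by rewrite (negbTE sep) orbF => /eqP.
Qed.

Lemma characters_independent l w : vanishes_on_torus l -> coef_of l w = 0.
Proof.
apply: (coef_of_vanishing_in (U := map snd l)) => e el.
by rewrite inE map_f ?orbT.
Qed.

End Independence.

Section OrbitSemigroup.
Variables (k : fieldType) (Q0 Q1 : finType) (hd tl : Q1 -> Q0).

Definition monomial (m : Q1 -> nat) (V : Q1 -> k) : k := \prod_a V a ^+ m a.

Lemma char_eval_ffun (s : Q0 -> int) (g : Q0 -> k) :
  char_eval [ffun x => s x] g = char_eval s g.
Proof. by apply: eq_bigr => x _; rewrite ffunE. Qed.

Lemma char_eval_mweight (g : Q0 -> k) (m : Q1 -> nat) : torus_elt g ->
  char_eval (mweight hd tl m) g = \prod_a (g (tl a) / g (hd a)) ^+ m a.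
Proof.
move=> Hg; rewrite /char_eval /mweight /weight.
have expz_sum (x : Q0) (f : Q1 -> int) : g x ^ (\sum_a f a) = \prod_a g x ^ f a.
  by apply: (big_morph (fun z => g x ^ z)) => [z1 z2|]; rewrite ?expfzDr ?expr0z.
have indicator_prod (z : Q0) (n : int) : \prod_x g x ^ ((z == x)%:R * n) = g z ^ n.
  rewrite (bigD1 z) //= eqxx mul1r big1 ?mulr1 // => x /negbTE.
  by rewrite eq_sym => ->; rewrite mul0r expr0z.
under eq_bigr do rewrite expz_sum.
rewrite exchange_big /=; apply: eq_bigr => a _.
under eq_bigr do rewrite mulrBl expfzDr // -mulrN.
by rewrite big_split /= !indicator_prod natz -exprnN -exprnP exprMn exprVn.
Qed.

Lemma monomial_act (g : Q0 -> k) (m : Q1 -> nat) (V : Q1 -> k) : torus_elt g ->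
  monomial m (rep_act hd tl (torus_inv g) V) =
  char_eval (mweight hd tl m) g * monomial m V.
Proof.
move=> Hg; rewrite char_eval_mweight // /monomial -big_split /=.
apply: eq_bigr => a _; rewrite -exprMn /rep_act /torus_inv invrK.
by rewrite mulrC mulrA [g (tl a) * _]mulrC.
Qed.

Lemma monomial_semi_inv (m : Q1 -> nat) :
  semi_inv hd tl (mweight hd tl m) (monomial m).
Proof.
split=> [|g Hg V]; last exact: monomial_act.
exists [:: (1, [ffun a => m a])] => V; rewrite big_seq1 /= mul1r.
by apply: eq_bigr => a _; rewrite ffunE.
Qed.

Lemma orbit_semigroup_ext (W : Q1 -> k) (s1 s2 : Q0 -> int) :
  s1 =1 s2 -> orbit_semigroup hd tl W s1 -> orbit_semigroup hd tl W s2.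
Proof.
move=> s12 [f [[Hpoly Hinv] fW]]; exists f; split=> //; split=> // g Hg V.
by rewrite Hinv //; congr (_ * _); apply: eq_bigr => x _; rewrite s12.
Qed.

Lemma mweight_in_orbit_semigroup (W : Q1 -> k) (m : Q1 -> nat) :
  (forall a, m a != 0%N -> W a != 0) -> orbit_semigroup hd tl W (mweight hd tl m).
Proof.
move=> Hm; exists (monomial m); split; first exact: monomial_semi_inv.
apply/prodf_neq0 => a _; have [->|/Hm Wa] := eqVneq (m a) 0%N.
  by rewrite expr0 oner_neq0.
exact: expf_neq0.
Qed.

Hypothesis char0 : [pchar k] =i pred0.

(* Conversely, by the independence of characters, a semi-invariant of
   weight sigma not vanishing at W has a monomial of weight sigma that does
   not vanish at W. *)
Lemma orbit_semigroup_mweight (W : Q1 -> k) (sigma : Q0 -> int) :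
  orbit_semigroup hd tl W sigma ->
  exists m : Q1 -> nat,
    (forall a, m a != 0%N -> W a != 0) /\ mweight hd tl m =1 sigma.
Proof.
case=> f [[[s f_def] f_semi] fW].
pose wvec (m : {ffun Q1 -> nat}) : {ffun Q0 -> int} := [ffun x => mweight hd tl m x].
pose sv : {ffun Q0 -> int} := [ffun x => sigma x].
pose T (e : k * {ffun Q1 -> nat}) := e.1 * monomial e.2 W.
(* As a function of g, char_comb l g = f (g^-1 . W) - sigma(g) f(W). *)
pose l := rcons [seq ((T e, wvec e.2) : k * {ffun Q0 -> int}) | e <- s] (- f W, sv).
have l_vanishes : vanishes_on_torus l.
  move=> g Hg; rewrite /char_comb /l -cats1 big_cat big_seq1 big_map /=.
  under eq_bigr => e _ do rewrite /wvec char_eval_ffun /T mulrAC -mulrA -monomial_act //.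
  by rewrite /monomial -f_def f_semi // /sv char_eval_ffun mulNr mulrC subrr.
(* Hence f(W) is the sum of the terms of f of weight sigma evaluated at W. *)
have := characters_independent char0 sv l_vanishes.
rewrite /coef_of /l -cats1 big_cat big_map /= big_cons big_nil eqxx addr0.
move=> /eqP; rewrite addr_eq0 opprK => /eqP fW_def.
have [e es /andP[/eqP e_weight Te]] : exists2 e, e \in s & (wvec e.2 == sv) && (T e != 0).
  apply/hasP; apply: contraR fW => /hasPn none.
  rewrite -fW_def big_seq_cond big1 // => e /andP[es e_w]; move: (none e es).
  by rewrite e_w /= negbK => /eqP.
exists e.2; split; last by move=> x; move/ffunP: e_weight => /(_ x); rewrite !ffunE.
move=> a ea; apply: contraNneq Te => Wa0; rewrite /T /monomial (bigD1 a) //=.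
by rewrite Wa0 expr0n (negbTE ea) mul0r mulr0.
Qed.

End OrbitSemigroup.

Lemma nontrivial_kernel (F : fieldType) (I J : finType) (A : {set I}) (B : {set J})
    (M : J -> I -> F) :
  (#|B| < #|A|)%N ->
  exists c : I -> F, [/\ forall i, i \notin A -> c i = 0, exists i, c i != 0 &
    forall j, j \in B -> \sum_(i in A) M j i * c i = 0].
Proof.
move=> ltBA.
pose X : 'M[F]_(#|A|, #|B|) := \matrix_(r, s) M (enum_val s) (enum_val r).
have /matrix0Pn[r0 [r1 ker_r01]] : kermx X != 0.
  rewrite kermx_eq0 /row_free; apply/negP => /eqP rkX.
  by move: (rank_leq_col X); rewrite rkX leqNgt ltBA.
pose c i := \sum_(r < #|A| | enum_val r == i) kermx X r0 r.
have cE r : c (enum_val r) = kermx X r0 r.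
  by rewrite /c (big_pred1 r) // => r'; apply/eqP/eqP => [/enum_val_inj|->].
exists c; split.
- move=> i iA; rewrite /c big_pred0 // => r; apply/negP => /eqP ri.
  by move: iA; rewrite -ri enum_valP.
- by exists (enum_val r1); rewrite cE.
move=> j jB; rewrite big_enum_val /=.
have ker_col (s : 'I_#|B|) : \sum_r kermx X r0 r * X r s = 0.
  by have := congr1 (fun Z : 'M[F]_(#|A|, #|B|) => Z r0 s) (mulmx_ker X); rewrite !mxE.
rewrite -[RHS](ker_col (enum_rank_in jB j)); apply: eq_bigr => r _.
by rewrite [X _ _]mxE (enum_rankK_in _ jB) // mulrC cE.
Qed.

Section Rounding.
Variables (Q0 Q1 : finType) (hd tl : Q1 -> Q0).

Definition out_arcs (F : {set Q1}) (x : Q0) : {set Q1} := [set a in F | tl a == x].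
Definition in_arcs (F : {set Q1}) (x : Q0) : {set Q1} := [set a in F | hd a == x].

(* Number of ends of arcs of F at x (a loop counts twice). *)
Definition degree (F : {set Q1}) (x : Q0) : nat := #|out_arcs F x| + #|in_arcs F x|.

(* Handshake lemma: every arc has two ends. *)
Lemma sum_degree (F : {set Q1}) : (\sum_x degree F x = #|F| * 2)%N.
Proof.
have ends (P : Q1 -> Q0) : (\sum_x #|[set a in F | P a == x]| = #|F|)%N.
  rewrite -sum1_card (partition_big P predT) //; apply: eq_bigr => x _.
  by rewrite -sum1_card; apply: eq_bigl => a; rewrite inE.
by rewrite big_split /= !ends muln2 addnn.
Qed.

Lemma touched_vertices_le (F : {set Q1}) : (forall x, degree F x != 1%N) ->
  (#|[set x | 0 < degree F x]| <= #|F|)%N.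
Proof.
move=> no_deg1; rewrite -(leq_pmul2r (isT : (0 < 2)%N)) -sum_degree -sum_nat_const.
rewrite [X in (_ <= X)%N](bigID (fun x => 0 < degree F x)%N) /=.
apply: leq_trans (leq_addr _ _); rewrite big_mkcond [X in (_ <= X)%N]big_mkcond.
apply: leq_sum => x _; rewrite inE; case: ifP => // deg_gt0.
by rewrite ltn_neqAle eq_sym no_deg1.
Qed.

Lemma weight_on (R : pzRingType) (F : {set Q1}) (y : Q1 -> R) (x : Q0) :
  \sum_(a in F) ((tl a == x)%:R - (hd a == x)%:R) * y a =
  \sum_(a in out_arcs F x) y a - \sum_(a in in_arcs F x) y a.
Proof.
have select (P : pred Q1) :
    \sum_(a in F) (P a)%:R * y a = \sum_(a in [set b in F | P b]) y a.
  rewrite [RHS]big_mkcond [LHS]big_mkcond; apply: eq_bigr => a _; rewrite inE.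
  by case: (a \in F); case: (P a); rewrite /= ?mul1r ?mul0r.
by under eq_bigr do rewrite mulrBl; rewrite sumrB !select.
Qed.

Lemma weight_supported (R : pzRingType) (F : {set Q1}) (c : Q1 -> R) (x : Q0) :
  (forall a, a \notin F -> c a = 0) ->
  weight hd tl c x = \sum_(a in F) ((tl a == x)%:R - (hd a == x)%:R) * c a.
Proof.
move=> c_supp; rewrite /weight (bigID (mem F)) /= [X in _ + X]big1 ?addr0 //.
by move=> a /c_supp ->; rewrite mulr0.
Qed.

Lemma circulation_exists (F : {set Q1}) (a1 : Q1) : a1 \in F ->
  (forall x, degree F x != 1%N) ->
  exists c : Q1 -> rat, [/\ forall a, a \notin F -> c a = 0, exists a, c a != 0 &
    forall x, weight hd tl c x = 0].
Proof.
move=> a1F no_deg1; set V := [set x | 0 < degree F x]%N.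
have x0V : tl a1 \in V.
  rewrite inE addn_gt0 card_gt0; apply/orP; left.
  by apply/set0Pn; exists a1; rewrite inE a1F eqxx.
have ltVF : (#|V :\ tl a1| < #|F|)%N.
  by move: (touched_vertices_le no_deg1); rewrite (cardsD1 (tl a1) V) x0V.
have [c [c_supp c_nz c_ker]] :=
  nontrivial_kernel (fun x a => (tl a == x)%:R - (hd a == x)%:R : rat) ltVF.
have c_off_x0 x : x != tl a1 -> weight hd tl c x = 0.
  move=> xx0; rewrite (weight_supported x c_supp).
  case xV: (x \in V); first by rewrite c_ker // in_setD1 xx0 xV.
  move: xV; rewrite inE lt0n => /negbFE; rewrite addn_eq0.
  case/andP => /eqP/cards0_eq out0 /eqP/cards0_eq in0.
  by rewrite weight_on out0 in0 !big_set0 subrr.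
exists c; split=> // x; have [->|/c_off_x0 //] := eqVneq x (tl a1).
have := weight_sum0 hd tl c.
by rewrite (bigD1 (tl a1)) //= big1 ?addr0 // => x' /c_off_x0.
Qed.

Definition fractional (y : Q1 -> rat) : {set Q1} := [set a | y a \isn't a Num.int].

(* If all weights of y are integers, then no vertex is an end of exactly
   one fractional arc: otherwise its weight would be that value up to sign
   plus an integer. *)
Lemma fractional_degree (y : Q1 -> rat) :
  (forall x, weight hd tl y x \is a Num.int) -> forall x, degree (fractional y) x != 1%N.
Proof.
move=> y_int x; set F := fractional y; apply/negP => /eqP deg1.
have frac_part : \sum_(a in out_arcs F x) y a - \sum_(a in in_arcs F x) y a \is a Num.int.
  have := y_int x; rewrite /weight (bigID (mem F)) /= weight_on => w_int.
  rewrite -[X in X \is a _](addrK (\sum_(a | a \notin F)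
      ((tl a == x)%:R - (hd a == x)%:R) * y a)).
  rewrite rpredB // rpred_sum // => a aF.
  by rewrite rpredM ?rpredB ?natr_int //; move: aF; rewrite inE negbK.
have frac_arc (D : {set Q1}) :
    D \subset F -> #|D| = 1%N -> exists2 a, a \in F & D = [set a].
  move=> DF /eqP/cards1P[a Da]; exists a => //.
  by apply: (subsetP DF); rewrite Da set11.
have sub_out : out_arcs F x \subset F by apply/subsetP => a; rewrite inE => /andP[].
have sub_in : in_arcs F x \subset F by apply/subsetP => a; rewrite inE => /andP[].
move: deg1 frac_part; rewrite /degree.
case out1: #|out_arcs F x| => [|[|//]]; case in1: #|in_arcs F x| => [|[|//]] // _.
- have [a aF ->] := frac_arc _ sub_in in1.
  rewrite (cards0_eq out1) big_set0 big_set1 sub0r rpredN.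
  by move: aF; rewrite inE => /negbTE ->.
- have [a aF ->] := frac_arc _ sub_out out1.
  rewrite (cards0_eq in1) big_set0 big_set1 subr0.
  by move: aF; rewrite inE => /negbTE ->.
Qed.

End Rounding.

(* Moving a nonnegative vector y along a nonzero direction c until the
   first coordinate in the support of c becomes an integer keeps it
   nonnegative. *)
Lemma shift_to_integer (I : finType) (y c : I -> rat) (a1 : I) :
  (forall a, 0 <= y a) -> c a1 != 0 ->
  exists t : rat, (forall a, 0 <= y a + t * c a) /\
    exists2 a0, c a0 != 0 & y a0 + t * c a0 \is a Num.int.
Proof.
move=> y_ge0 ca1.
pose target a : int := if 0 < c a then Num.floor (y a) + 1 else Num.floor (y a).
pose d a := ((target a)%:~R - y a) / c a.
have land a : c a != 0 -> y a + d a * c a = (target a)%:~R.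
  by move=> ca; rewrite /d -mulrA mulVf // mulr1 addrC subrK.
have d_ge0 a : c a != 0 -> 0 <= d a.
  move=> ca; rewrite /d /target; case: ifP => c_pos.
    by apply: divr_ge0; [rewrite subr_ge0 ltW // floorD1_gt | exact: ltW].
  rewrite -mulrNN -invrN; apply: divr_ge0; first by rewrite opprB subr_ge0 floor_le.
  by rewrite oppr_ge0 leNgt c_pos.
have [a0 ca0 d_min] := @arg_minP _ _ _ a1 (fun a => c a != 0) d ca1.
exists (d a0); split; last by exists a0; rewrite // land // intr_int.
move=> a; have [-> | ca] := eqVneq (c a) 0; first by rewrite mulr0 addr0.
case c_pos: (0 < c a).
  by rewrite addr_ge0 // mulr_ge0 ?d_ge0 ?ltW.
apply: le_trans (_ : 0 <= y a + d a * c a) _.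
  by rewrite land // /target c_pos ler0z floor_ge0.
by rewrite lerD2l ler_wnM2r ?d_min // leNgt c_pos.
Qed.

Section Integrality.
Variables (Q0 Q1 : finType) (hd tl : Q1 -> Q0).

Lemma round_step (y : Q1 -> rat) (a1 : Q1) :
  (forall a, 0 <= y a) -> (forall x, weight hd tl y x \is a Num.int) ->
  a1 \in fractional y ->
  exists y' : Q1 -> rat, [/\ forall a, 0 <= y' a, forall a, y' a != 0 -> y a != 0,
    forall x, weight hd tl y' x = weight hd tl y x &
    (#|fractional y'| < #|fractional y|)%N].
Proof.
move=> y_ge0 y_int a1F; set F := fractional y.
have [c [c_supp [a2 ca2] c_circ]] := circulation_exists a1F (fractional_degree y_int).
have [t [y'_ge0 [a0 ca0 y'a0_int]]] := shift_to_integer y_ge0 ca2.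
pose y' a := y a + t * c a.
have cF a : c a != 0 -> a \in F by apply: contraR => /c_supp ->.
have y'_off a : c a = 0 -> y' a = y a by move=> ca; rewrite /y' ca mulr0 addr0.
exists y'; split => //.
- move=> a; have [/y'_off -> // | /cF] := eqVneq (c a) 0.
  by rewrite inE => ya_frac _; apply: contraNneq ya_frac => ->; rewrite rpred0.
- by move=> x; rewrite weight_shift c_circ mulr0 addr0.
have sub : fractional y' \subset F :\ a0.
  apply/subsetP => a; rewrite !inE => y'a; apply/andP; split.
    by apply: contraNneq y'a => ->.
  by have [/y'_off ya | /cF] := eqVneq (c a) 0; [rewrite -ya | rewrite inE].
by apply: leq_ltn_trans (subset_leq_card sub) _; rewrite (cardsD1 a0 F) (cF a0 ca0).
Qed.

Lemma integral_labelling (S : pred Q1) (sigma : Q0 -> int) (y : Q1 -> rat) :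
  (forall a, 0 <= y a) -> (forall a, y a != 0 -> S a) ->
  (forall x, weight hd tl y x = (sigma x)%:~R) ->
  exists m : Q1 -> nat, (forall a, m a != 0%N -> S a) /\
    mweight hd tl m =1 sigma.
Proof.
have [N] := ubnP #|fractional y|; elim: N y => // N IH y.
rewrite ltnS => card_le y_ge0 y_S y_w.
have y_int x : weight hd tl y x \is a Num.int by rewrite y_w intr_int.
have [F0 | [a1 a1F]] := set_0Vmem (fractional y); last first.
  have [y' [y'_ge0 y'_supp y'_w card_lt]] := round_step y_ge0 y_int a1F.
  apply: (IH y') => // [|a /y'_supp/y_S //|x]; last by rewrite y'_w.
  exact: leq_trans card_lt card_le.
have y_nat a : y a = (`|Num.floor (y a)|%N)%:R.
  have : a \notin fractional y by rewrite F0 inE.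
  rewrite inE => /negbNE /floorK ya_int.
  by rewrite -[LHS]ya_int pmulrn gez0_abs ?floor_ge0.
exists (fun a => `|Num.floor (y a)|%N); split.
  by move=> a ma; apply: y_S; rewrite y_nat pnatr_eq0.
move=> x; apply: (@intr_inj rat); rewrite -y_w /mweight /weight rmorph_sum.
by apply: eq_bigr => a _; rewrite rmorphM rmorphB /= !rmorph_nat -y_nat.
Qed.

End Integrality.

Unset Implicit Arguments.

Theorem proposition6p3 (k : closedFieldType) (Hchar : [pchar k] =i pred0)
    (Q0 Q1 : finType) (hd tl : Q1 -> Q0)
    (Hacyc : no_oriented_cycles hd tl) (W : Q1 -> k) :
  saturated (orbit_semigroup hd tl W).
Proof.
move=> sigma n n_gt0 /(orbit_semigroup_mweight Hchar) [m [m_supp m_w]].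
have n_neq0 : (n%:R : rat) != 0 by rewrite pnatr_eq0 -lt0n.
pose y a : rat := (m a)%:R / n%:R.
have y_ge0 a : 0 <= y a by rewrite divr_ge0 ?ler0n.
have y_supp a : y a != 0 -> W a != 0.
  by rewrite mulf_eq0 negb_or pnatr_eq0 => /andP[/m_supp].
have y_w x : weight hd tl y x = (sigma x)%:~R.
  by rewrite weight_divn m_w intrM -pmulrn mulrAC mulfV // mul1r.
have [m' [m'_supp m'_w]] := integral_labelling y_ge0 y_supp y_w.
by apply: (orbit_semigroup_ext m'_w); apply: mweight_in_orbit_semigroup.
Qed.
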